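(* For any $d\ge1$ and $j\in[d]$, the function $f:\mathbb R^d\to\mathbb R$, $f(\zeta)=\mathrm{smax}(\zeta)_j=e^{\zeta_j}/\sum_{i=1}^de^{\zeta_i}$, is real-analytic of $(1/(2e^2),1)$-type (constant functions).
   Context: Let $U\subseteq\mathbb R^d$ be open and $\tau_1,\tau_2:U\to\mathbb R_{>0}$. A real-analytic $f:U\to\mathbb R$ has $(\tau_1,\tau_2)$-type if for every $\zeta_0\in U$, writing the power series of $f$ at $\zeta_0$ as $\sum_\mu a_{\zeta_0,\mu}(\zeta-\zeta_0)^\mu$ (over multi-indices $\mu$), for every $\zeta$ with $\|\zeta-\zeta_0\|_\infty\le\tau_1(\zeta_0)$ the series converges absolutely and $\sum_{\mu:|\mu|\ge1}|a_{\zeta_0,\mu}|\,|\zeta-\zeta_0|^\mu\le\tau_2(\zeta_0)$, where $|\zeta-\zeta_0|^\mu=\prod_i|\zeta_i-\zeta_{0,i}|^{\mu_i}$. *)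

From mathcomp Require Import all_boot all_order all_algebra.
From mathcomp Require Import all_classical all_reals all_analysis.
Set Implicit Arguments. Unset Strict Implicit. Unset Printing Implicit Defensive.
Import Order.TTheory GRing.Theory Num.Theory.
Import numFieldNormedType.Exports.
Local Open Scope classical_set_scope.
Local Open Scope ring_scope.

Section Defs.
Variables (R : realType) (d : nat).

Definition pt := 'I_d -> R.
Definition midx := {ffun 'I_d -> nat}.

Definition mdeg (mu : midx) : nat := (\sum_i mu i)%N.

Definition mono (z0 z : pt) (mu : midx) : R :=
  \prod_i (z i - z0 i) ^+ (mu i).

Definition amono (z0 z : pt) (mu : midx) : R :=
  \prod_i `|z i - z0 i| ^+ (mu i).

Definition inf_dist_le (z0 z : pt) (r : R) : Prop :=
  forall i, `|z i - z0 i| <= r.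

Definition hom_part (a : midx -> R) (z0 z : pt) (n : nat) : R :=
  \sum_(m : {ffun 'I_d -> 'I_n.+1} | (\sum_i (m i : nat))%N == n)
     a [ffun i => (m i : nat)] * mono z0 z [ffun i => (m i : nat)].

Definition abs_sum (a : midx -> R) (z0 z : pt) (S : set midx) : \bar R :=
  \esum_(mu in S) (`|a mu| * amono z0 z mu)%:E.

Definition abs_conv (a : midx -> R) (z0 z : pt) : Prop :=
  (abs_sum a z0 z setT < +oo)%E.

Definition is_power_series_at (U : set pt) (f : pt -> R) (z0 : pt)
    (a : midx -> R) : Prop :=
  exists2 r : R, 0 < r &
    forall z, (forall i, `|z i - z0 i| < r) ->
      U z /\ abs_conv a z0 z /\
      (fun N : nat => \sum_(n < N) hom_part a z0 z n) @ \oo --> f z.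

Definition real_analytic_on (U : set pt) (f : pt -> R) : Prop :=
  forall z0, U z0 -> exists a, is_power_series_at U f z0 a.

Definition analytic_type (U : set pt) (tau1 tau2 : pt -> R) (f : pt -> R) : Prop :=
  real_analytic_on U f /\
  forall z0, U z0 -> forall a, is_power_series_at U f z0 a ->
    forall z, inf_dist_le z0 z (tau1 z0) ->
      abs_conv a z0 z /\
      (abs_sum a z0 z [set mu | (0 < mdeg mu)%N] <= (tau2 z0)%:E)%E.

End Defs.

Definition smax (R : realType) (d : nat) (j : 'I_d) (z : 'I_d -> R) : R :=
  expR (z j) / \sum_(i < d) expR (z i).

From mathcomp Require Import all_boot all_order all_algebra.
From mathcomp Require Import all_classical all_reals all_analysis.
From mathcomp Require Import ring lra.
Set Implicit Arguments. Unset Strict Implicit. Unset Printing Implicit Defensive.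
Import Order.TTheory GRing.Theory Num.Theory.
Import numFieldNormedType.Exports.
Local Open Scope classical_set_scope.
Local Open Scope ring_scope.

(* Put [p := smax z0] and [w := z - z0]. Then [smax j z = p_j e^(w_j) / A]
   with [A = \sum_i p_i e^(w_i)], and since [\sum_i p_i = 1] the expansion [a]
   of the quotient is determined degree by degree by
   [a = c - \sum_i p_i (e^(w_i) - 1) a], [c] the expansion of [p_j e^(w_j)].
   For [|w_i| <= r] the degree-[n] majorants
   [al_n = \sum_(|mu| = n) |a_mu| |w|^mu] then satisfy
   [al_n <= p_j r^n + \sum_(k >= 1) r^k al_(n-k)], so for [r = 1/8], which
   exceeds [1/(2e^2)], they sum to at most [4/3 p_j]; as [al_0 = p_j], the
   non-constant part is at most [p_j / 3 <= 1].  Cauchy products with the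
   exponential series show that [a] sums to the quotient, and power series are
   unique (along rays through [z0], then by Kronecker substitution in one
   variable), so the bound holds for every expansion of [smax j] at [z0]. *)

Section HomogeneousComponents.
Variables (R : realType) (d : nat).
Local Notation midx := (midx d).

Definition midx_of_deg n : set midx := [set mu | mdeg mu = n].

Definition mpow (w : 'I_d -> R) (mu : midx) : R := \prod_i w i ^+ mu i.

Definition hcomp (x : midx -> R) (w : 'I_d -> R) n : R :=
  \sum_(mu \in midx_of_deg n) x mu * mpow w mu.

Lemma leq_mdeg (mu : midx) i : (mu i <= mdeg mu)%N.
Proof. by rewrite /mdeg (bigD1 i) //= leq_addr. Qed.

Definition bounded_midx n (m : {ffun 'I_d -> 'I_n.+1}) : midx :=
  [ffun i => (m i : nat)].

Lemma bounded_midx_surj n (mu : midx) : mdeg mu = n ->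
  exists m : {ffun 'I_d -> 'I_n.+1}, bounded_midx m = mu.
Proof.
move=> dmu; exists [ffun i => inord (mu i)]; apply/ffunP => i.
by rewrite !ffunE inordK // ltnS -dmu leq_mdeg.
Qed.

Lemma finite_midx_of_deg n : finite_set (midx_of_deg n).
Proof.
apply: (@sub_finite_set _ _ ((@bounded_midx n) @` setT)); last first.
  by apply: finite_image; exact: finite_finset.
by move=> mu /= /bounded_midx_surj [m <-]; exists m.
Qed.

Lemma hcomp_finE x w n : hcomp x w n =
  \sum_(mu <- finmap.enum_fset (fset_set (midx_of_deg n))) x mu * mpow w mu.
Proof. by rewrite /hcomp fsbig_finite //; exact: finite_midx_of_deg. Qed.

Lemma hom_partE (a : midx -> R) (z0 z : pt R d) n :
  hom_part a z0 z n = hcomp a (fun i => z i - z0 i) n.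
Proof.
rewrite /hom_part bigfs ?index_enum_uniq //; last first.
  by move=> i _; rewrite mem_index_enum.
rewrite /hcomp; symmetry; apply: (reindex_fsbig (@bounded_midx n)); split.
- move=> m /= /eqP h; rewrite /midx_of_deg /mdeg /= -[X in _ = X]h.
  by apply: eq_bigr => i _; rewrite ffunE.
- move=> m1 m2 _ _ /ffunP h; apply/ffunP => i; apply/val_inj.
  by have := h i; rewrite !ffunE.
- move=> mu /= dmu; have [m em] := bounded_midx_surj dmu; exists m => //.
  rewrite /in_mem /=; apply/eqP; rewrite -[RHS]dmu -em /mdeg.
  by apply: eq_bigr => i _; rewrite ffunE.
Qed.

Lemma esum_midx_graded (F : midx -> R) : (forall mu, 0 <= F mu) ->
  (\esum_(mu in [set: midx]) (F mu)%:E =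
   \sum_(n <oo) (\sum_(mu \in midx_of_deg n) F mu)%:E)%E.
Proof.
move=> F0.
have -> : [set: midx] = \bigcup_(n in [set: nat]) midx_of_deg n.
  by apply/seteqP; split => // mu _; exists (mdeg mu).
rewrite esum_bigcupT //; last by move=> n m _ _ [mu [/= <- <-]].
rewrite nneseries_esumT; last by move=> n; rewrite lee_fin; apply: fsumr_ge0.
apply: eq_esum => n _; rewrite esum_fset; last 2 first.
- exact: finite_midx_of_deg.
- by move=> mu _; rewrite lee_fin.
by rewrite fsumEFin //; exact: finite_midx_of_deg.
Qed.

Definition midx_add (mu : midx) i k : midx :=
  [ffun l => if l == i then (mu l + k)%N else mu l].
Definition midx_sub (mu : midx) i k : midx :=
  [ffun l => if l == i then (mu l - k)%N else mu l].

Lemma mdeg_add (mu : midx) i k : mdeg (midx_add mu i k) = (mdeg mu + k)%N.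
Proof.
rewrite /mdeg (bigD1 i) //= [in RHS](bigD1 i) //= ffunE eqxx.
rewrite -addnA [(k + _)%N]addnC addnA; congr (_ + _ + _)%N.
by apply: eq_bigr => l /negbTE nl; rewrite ffunE nl.
Qed.

Lemma mpow_add w (mu : midx) i k :
  mpow w (midx_add mu i k) = w i ^+ k * mpow w mu.
Proof.
rewrite /mpow (bigD1 i) //= [in RHS](bigD1 i) //= ffunE eqxx exprD.
rewrite mulrA [w i ^+ k * _]mulrC; congr (_ * _ * _).
by apply: eq_bigr => l /negbTE nl; rewrite ffunE nl.
Qed.

Lemma midx_subK (mu : midx) i k : (k <= mu i)%N ->
  midx_add (midx_sub mu i k) i k = mu.
Proof.
move=> kmu; apply/ffunP => l; rewrite !ffunE; case: eqP => [->|//].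
by rewrite subnK.
Qed.

Lemma midx_addK (mu : midx) i k : midx_sub (midx_add mu i k) i k = mu.
Proof. by apply/ffunP => l; rewrite !ffunE; case: eqP => [->|//]; rewrite addnK. Qed.

Lemma mdeg_sub (mu : midx) i k : (k <= mu i)%N ->
  mdeg (midx_sub mu i k) = (mdeg mu - k)%N.
Proof. by move=> kmu; rewrite -{2}(midx_subK kmu) mdeg_add addnK. Qed.

Lemma hcomp_shift x w n i k : (k <= n)%N ->
  \sum_(mu \in midx_of_deg n)
     ((if (k <= mu i)%N then x (midx_sub mu i k) else 0) * mpow w mu)
  = w i ^+ k * hcomp x w (n - k).
Proof.
move=> kn; rewrite /hcomp mulr_fsumr.
have -> : \sum_(mu \in midx_of_deg n)
    ((if (k <= mu i)%N then x (midx_sub mu i k) else 0) * mpow w mu) =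
  \sum_(mu \in midx_of_deg n `&` [set mu : midx | (k <= mu i)%N])
    (x (midx_sub mu i k) * mpow w mu).
  rewrite fsbig_mkcondr; apply: eq_fsbigr => mu _.
  have -> : (mu \in [set mu0 : midx | (k <= mu0 i)%N]) = (k <= mu i)%N.
    by apply/idP/idP => [/set_mem //| h]; exact: mem_set.
  by case: ifP => _; rewrite ?mul0r.
have -> : midx_of_deg n `&` [set mu : midx | (k <= mu i)%N] =
    (fun nu => midx_add nu i k) @` midx_of_deg (n - k).
  apply/seteqP; split.
  - move=> mu [/= dmu kmu]; exists (midx_sub mu i k); last exact: midx_subK.
    by rewrite /midx_of_deg /= mdeg_sub // dmu.
  - move=> _ [nu dnu <-]; split; first by rewrite /midx_of_deg /= mdeg_add dnu subnK.
    by rewrite /= ffunE eqxx leq_addl.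
rewrite fsbig_image; last first.
  by move=> u v _ _ /(congr1 (fun m => midx_sub m i k)); rewrite !midx_addK.
by apply: eq_fsbigr => nu _; rewrite midx_addK mpow_add; ring.
Qed.

(* The coefficients of the product of [\sum_i c_i \sum_(k >= 1) e_k w_i^k]
   with the series of coefficients [x]. *)
Definition mconv (c : 'I_d -> R) (e : nat -> R) (x : midx -> R) (mu : midx) : R :=
  \sum_(i < d) c i * \sum_(1 <= k < (mu i).+1) e k * x (midx_sub mu i k).

Lemma hcomp_mconv c e x w n :
  hcomp (mconv c e x) w n =
  \sum_(i < d) c i * \sum_(1 <= k < n.+1) e k * (w i ^+ k * hcomp x w (n - k)).
Proof.
transitivity (\sum_(mu \in midx_of_deg n) \sum_(i < d) \sum_(1 <= k < n.+1)
  (c i * e k * ((if (k <= mu i)%N then x (midx_sub mu i k) else 0) * mpow w mu))).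
  apply: eq_fsbigr => mu /set_mem dmu.
  rewrite /mconv mulr_suml; apply: eq_bigr => i _.
  have hmu : ((mu i).+1 <= n.+1)%N by rewrite ltnS -dmu leq_mdeg.
  rewrite [RHS](@big_cat_nat _ _ _ (mu i).+1) //=.
  rewrite [X in _ = _ + X]big_nat_cond [X in _ = _ + X]big1 ?addr0; last first.
    by move=> k; rewrite andbT => /andP[h _]; rewrite leqNgt h /=; ring.
  rewrite -mulrA mulr_suml mulr_sumr; apply: eq_big_nat => k /andP[_ h].
  by rewrite ltnS in h; rewrite h; ring.
rewrite fsbig_finite /=; last exact: finite_midx_of_deg.
under [RHS]eq_bigr do rewrite mulr_sumr.
rewrite exchange_big /=; apply: eq_bigr => i _.
rewrite exchange_big /=; apply: eq_big_nat => k /andP[_ h]; rewrite ltnS in h.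
rewrite -hcomp_shift // fsbig_finite /=; last exact: finite_midx_of_deg.
by rewrite mulrA mulr_sumr; apply: eq_bigr => mu _; rewrite mulrA.
Qed.

Lemma hcompB x y w n :
  hcomp (fun mu => x mu - y mu) w n = hcomp x w n - hcomp y w n.
Proof. by rewrite !hcomp_finE -sumrB; apply: eq_bigr => mu _; rewrite mulrBl. Qed.

Lemma hcompD x y w n :
  hcomp (fun mu => x mu + y mu) w n = hcomp x w n + hcomp y w n.
Proof. by rewrite !hcomp_finE -big_split; apply: eq_bigr => mu _; rewrite mulrDl. Qed.

Lemma hcompZw x w t n : hcomp x (fun i => t * w i) n = t ^+ n * hcomp x w n.
Proof.
rewrite /hcomp mulr_fsumr; apply: eq_fsbigr => mu /set_mem dmu.
rewrite /mpow; under eq_bigr do rewrite exprMn.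
by rewrite big_split /= prodrXr -/(mdeg mu) dmu; ring.
Qed.

Lemma mpow_ge0 w mu : (forall i, 0 <= w i) -> 0 <= mpow w mu.
Proof. by move=> w0; apply: prodr_ge0 => i _; apply: exprn_ge0. Qed.

Lemma normr_mpow w mu : `|mpow w mu| = mpow (fun i => `|w i|) mu.
Proof. by rewrite /mpow normr_prod; apply: eq_bigr => i _; rewrite normrX. Qed.

Lemma ler_mpow w w' mu : (forall i, 0 <= w i <= w' i) -> mpow w mu <= mpow w' mu.
Proof.
move=> ww; apply: ler_prod => i _; have /andP[w0 le_ww'] := ww i.
rewrite exprn_ge0 //=; apply: lerXn2r => //; rewrite nnegrE //.
exact: le_trans le_ww'.
Qed.

Lemma hcomp_ge0 x w n : (forall mu, 0 <= x mu) -> (forall i, 0 <= w i) ->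
  0 <= hcomp x w n.
Proof.
move=> x0 w0; rewrite hcomp_finE; apply: sumr_ge0 => mu _.
by rewrite mulr_ge0 // mpow_ge0.
Qed.

Lemma ler_hcomp x y w w' n : (forall mu, 0 <= x mu <= y mu) ->
  (forall i, 0 <= w i <= w' i) -> hcomp x w n <= hcomp y w' n.
Proof.
move=> xy ww; rewrite !hcomp_finE; apply: ler_sum => mu _.
have /andP[x0 le_xy] := xy mu.
by apply: ler_pM => //; [apply: mpow_ge0 => i; case/andP: (ww i) | exact: ler_mpow].
Qed.

Lemma ler_norm_hcomp x w n :
  `|hcomp x w n| <= hcomp (fun mu => `|x mu|) (fun i => `|w i|) n.
Proof.
rewrite !hcomp_finE; apply: le_trans (ler_norm_sum _ _ _) _.
by apply: ler_sum => mu _; rewrite normrM normr_mpow.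
Qed.

Definition midx0 : midx := [ffun => 0%N].

Lemma mdeg_eq0 (mu : midx) : (mdeg mu == 0%N) = (mu == midx0).
Proof.
rewrite /mdeg sum_nat_eq0; apply/forallP/eqP => [h|-> i]; last by rewrite ffunE.
by apply/ffunP => i; rewrite ffunE; apply/eqP/(implyP (h i)).
Qed.

Lemma mdeg_midx0 : mdeg midx0 = 0%N.
Proof. by apply/eqP; rewrite mdeg_eq0. Qed.

Lemma mpow_midx0 w : mpow w midx0 = 1.
Proof. by rewrite /mpow big1 // => i _; rewrite ffunE expr0. Qed.

Lemma hcomp_single x w n (m : midx) : mdeg m = n ->
  (forall mu, mdeg mu = n -> mu != m -> x mu = 0) -> hcomp x w n = x m * mpow w m.
Proof.
move=> dm xm; rewrite /hcomp (fsbigD1 m) //=; last exact: finite_midx_of_deg.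
by rewrite fsbig1 ?addr0 // => mu [/= dmu /eqP nm]; rewrite xm ?mul0r //; apply/eqP.
Qed.

Lemma hcomp0 x w : hcomp x w 0 = x midx0.
Proof.
rewrite (@hcomp_single x w 0 midx0) ?mpow_midx0 ?mulr1 ?mdeg_midx0 //.
by move=> mu /eqP; rewrite mdeg_eq0 => ->.
Qed.

End HomogeneousComponents.

Section OneVariableSeries.
Variable R : realType.

Lemma sum_antidiagonals (f : nat -> nat -> R) N :
  \sum_(n < N) \sum_(k < n.+1) f k (n - k)%N = \sum_(k < N) \sum_(m < N - k) f k m.
Proof.
elim: N => [|N IH]; first by rewrite !big_ord0.
rewrite big_ord_recr /= IH.
have -> : \sum_(k < N.+1) \sum_(m < N.+1 - k) f k m =
   \sum_(k < N.+1) (\sum_(m < N - k) f k m + f k (N - k)%N).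
  apply: eq_bigr => k _; have hk : (k <= N)%N by rewrite -ltnS.
  by rewrite subSn // big_ord_recr.
rewrite big_split /=; congr (_ + _).
by rewrite big_ord_recr /= subnn big_ord0 addr0.
Qed.

Lemma sum_antidiagonals_square (f : nat -> nat -> R) N :
  \sum_(n < N) \sum_(k < n.+1) f k (n - k)%N =
  \sum_(k < N) \sum_(m < N) (if (k + m < N)%N then f k m else 0).
Proof.
rewrite sum_antidiagonals; apply: eq_bigr => k _.
rewrite (big_ord_widen N (fun m => f k m)) ?leq_subr // big_mkcond /=.
by apply: eq_bigr => m _; rewrite ltn_subRL.
Qed.

Definition cauchy_prod (x y : R^nat) : R^nat :=
  fun n => \sum_(k < n.+1) x k * y (n - k)%N.

Lemma seriesM (x y : R^nat) N :
  series x N * series y N = \sum_(k < N) \sum_(m < N) x k * y m.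
Proof.
rewrite /series /= !big_mkord mulr_suml; apply: eq_bigr => k _.
by rewrite mulr_sumr.
Qed.

Lemma series_cauchy_prod (x y : R^nat) N :
  series (cauchy_prod x y) N =
  \sum_(k < N) \sum_(m < N) (if (k + m < N)%N then x k * y m else 0).
Proof.
by rewrite /series /= big_mkord /cauchy_prod (sum_antidiagonals_square (fun k m => x k * y m)).
Qed.

Lemma seriesM_sub_cauchy_prod (x y : R^nat) N :
  series x N * series y N - series (cauchy_prod x y) N =
  \sum_(k < N) \sum_(m < N) (if (k + m < N)%N then 0 else x k * y m).
Proof.
rewrite seriesM series_cauchy_prod -sumrB; apply: eq_bigr => k _.
rewrite -sumrB; apply: eq_bigr => m _.
by case: ifP => _; rewrite ?subrr ?subr0.
Qed.

Lemma nondecreasing_series_ge0 (u : R^nat) : (forall n, 0 <= u n) ->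
  nondecreasing_seq (series u).
Proof. by move=> u0; apply: (@nondecreasing_series _ u xpredT 0) => n _ _. Qed.

Lemma ler_sum_widen (F : nat -> R) N M : (forall k, 0 <= F k) -> (N <= M)%N ->
  \sum_(k < N) F k <= \sum_(k < M) F k.
Proof.
by move=> F0 NM; have := nondecreasing_series_ge0 F0 NM; rewrite /series /= !big_mkord.
Qed.

Lemma series_le_lim (u : R^nat) (U : R) : (forall n, 0 <= u n) ->
  series u @ \oo --> U -> forall N, series u N <= U.
Proof.
move=> u0 cu N; rewrite -(cvg_lim _ cu) //.
apply: nondecreasing_cvgn_le; first exact: nondecreasing_series_ge0.
by apply/cvg_ex; exists U.
Qed.

Section CauchyProductNonnegative.
Variables (u v : R^nat).
Hypotheses (u0 : forall n, 0 <= u n) (v0 : forall n, 0 <= v n).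

Lemma series_cauchy_prod_leM N :
  series (cauchy_prod u v) N <= series u N * series v N.
Proof.
rewrite -subr_ge0 seriesM_sub_cauchy_prod; apply: sumr_ge0 => k _.
by apply: sumr_ge0 => m _; case: ifP => _ //; apply: mulr_ge0.
Qed.

Lemma seriesM_le_cauchy_prod N :
  series u N * series v N <= series (cauchy_prod u v) (N + N)%N.
Proof.
have uv0 k m : 0 <= (if (k + m < N + N)%N then u k * v m else 0).
  by case: ifP => // _; exact: mulr_ge0.
rewrite seriesM series_cauchy_prod.
apply: le_trans (_ : \sum_(k < N) \sum_(m < N + N)
    (if (k + m < N + N)%N then u k * v m else 0) <= _); last first.
  apply: (ler_sum_widen (F := fun k => \sum_(m < N + N)
    (if (k + m < N + N)%N then u k * v m else 0))); last exact: leq_addr.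
  by move=> k; apply: sumr_ge0 => m _.
apply: ler_sum => k _.
apply: le_trans (_ : \sum_(m < N) (if (k + m < N + N)%N then u k * v m else 0) <= _).
  by apply: ler_sum => m _; rewrite ifT // -addSn leq_add // ltnW.
by apply: (ler_sum_widen (F := fun m => if (k + m < N + N)%N then u k * v m else 0));
  [exact: uv0 | exact: leq_addr].
Qed.

Lemma cvg_series_cauchy_prod_ge0 (U V : R) :
  series u @ \oo --> U -> series v @ \oo --> V ->
  series (cauchy_prod u v) @ \oo --> U * V.
Proof.
move=> cu cv.
have c0 n : 0 <= cauchy_prod u v n by apply: sumr_ge0 => k _; apply: mulr_ge0.
have leUV N : series (cauchy_prod u v) N <= U * V.
  apply: le_trans (series_cauchy_prod_leM N) _.
  by apply: ler_pM; rewrite ?series_le_lim //; apply: sumr_ge0.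
have cC : cvgn (series (cauchy_prod u v)).
  apply: nondecreasing_is_cvgn; first by apply: nondecreasing_series_ge0.
  by exists (U * V) => _ [N _ <-].
suff <- : limn (series (cauchy_prod u v)) = U * V by exact: cC.
apply/eqP; rewrite eq_le; apply/andP; split.
  by apply: limr_le => //; apply: nearW.
have cP : (fun N => series u N * series v N) @ \oo --> U * V by apply: cvgM.
rewrite -(cvg_lim _ cP) //; apply: limr_le; first by apply/cvg_ex; exists (U * V).
apply: nearW => N; apply: le_trans (seriesM_le_cauchy_prod N) _.
by apply: nondecreasing_cvgn_le => //; exact: nondecreasing_series_ge0.
Qed.

End CauchyProductNonnegative.

(* Cauchy's theorem on products of absolutely convergent series: the defect
   [series x N * series y N - series (cauchy_prod x y) N] is dominated by the
   same defect for [|x|] and [|y|], which tends to [0] by the nonnegative case. *)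
Lemma cvg_series_cauchy_prod (x y : R^nat) (X Y : R) :
  series x @ \oo --> X -> series y @ \oo --> Y ->
  cvgn (series (fun n => `|x n|)) -> cvgn (series (fun n => `|y n|)) ->
  series (cauchy_prod x y) @ \oo --> X * Y.
Proof.
move=> cx cy cx' cy'.
pose x' n := `|x n|; pose y' n := `|y n|.
pose D N := series x N * series y N - series (cauchy_prod x y) N.
pose D' N := series x' N * series y' N - series (cauchy_prod x' y') N.
have D'0 : D' @ \oo --> 0.
  have := cvgB (cvgM cx' cy') (cvg_series_cauchy_prod_ge0
     (fun n => normr_ge0 _) (fun n => normr_ge0 _) cx' cy').
  by rewrite subrr => h; apply: h; exact: nbhs_filter.
have D0 : D @ \oo --> 0.
  apply: (@squeeze_cvgr _ _ _ _ (fun N => - D' N) D') => //; last first.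
    by rewrite -oppr0; apply: cvgN.
  apply: nearW => N; rewrite -ler_norml /D /D' !seriesM_sub_cauchy_prod.
  apply: le_trans (ler_norm_sum _ _ _) _; apply: ler_sum => k _.
  apply: le_trans (ler_norm_sum _ _ _) _; apply: ler_sum => m _.
  by case: ifP => _; rewrite ?normr0 // normrM.
have -> : series (cauchy_prod x y) = fun N => series x N * series y N - D N.
  by apply/funext => N; rewrite /D; ring.
by rewrite -[X * Y]subr0; apply: cvgB => //; apply: cvgM.
Qed.

Lemma geometric_sum_le (r : R) N : 0 <= r <= 1/8 -> \sum_(k < N) r ^+ k <= 8/7.
Proof.
move=> /andP[r0 r8]; elim: N => [|N IH]; first by rewrite big_ord0; lra.
rewrite big_ord_recl expr0.
have -> : \sum_(i < N) r ^+ (bump 0 i) = r * \sum_(i < N) r ^+ i.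
  by rewrite mulr_sumr; apply: eq_bigr => i _; rewrite exprS.
have S0 : 0 <= \sum_(i < N) r ^+ i by apply: sumr_ge0 => i _; exact: exprn_ge0.
have : r * \sum_(i < N) r ^+ i <= 1/8 * (8/7) by apply: ler_pM.
lra.
Qed.

(* Summing the hypothesis over [n < N] gives [S <= c \sum_k r^k + (\sum_(k >= 1) r^k) S]
   for [S = \sum_(n < N) a_n]; for [r <= 1/8] these geometric sums are at most
   [8/7] and [1/7]. *)
Lemma renewal_sum_le (a : R^nat) (c r : R) : (forall n, 0 <= a n) -> 0 <= c ->
  0 <= r <= 1/8 ->
  (forall n, a n <= c * r ^+ n + \sum_(1 <= k < n.+1) r ^+ k * a (n - k)%N) ->
  forall N, \sum_(n < N) a n <= 4/3 * c.
Proof.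
move=> a0 c0 r01 ha N; have /andP[r0 r8] := r01.
pose u k := if k == 0%N then 0 else r ^+ k.
have u0 k : 0 <= u k by rewrite /u; case: eqP => _ //; exact: exprn_ge0.
set S := \sum_(n < N) a n.
have S0 : 0 <= S by apply: sumr_ge0.
have h1 : S <= c * \sum_(n < N) r ^+ n +
    \sum_(n < N) \sum_(k < n.+1) u k * a (n - k)%N.
  rewrite mulr_sumr -big_split /=; apply: ler_sum => n _.
  apply: le_trans (ha n) _; rewrite lerD2l.
  rewrite -(big_mkord xpredT (fun k => u k * a (n - k)%N)) big_ltn // /u eqxx.
  by rewrite mul0r add0r; apply: ler_sum_nat => k /andP[/gtn_eqF ->].
rewrite (sum_antidiagonals (fun k m => u k * a m)) in h1.
have h2 : \sum_(k < N) \sum_(m < N - k) u k * a m <= (\sum_(k < N) u k) * S.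
  rewrite mulr_suml; apply: ler_sum => k _; rewrite -mulr_sumr.
  by apply: ler_wpM2l => //; apply: (ler_sum_widen (F := a)) => //; exact: leq_subr.
have h3 : \sum_(k < N) u k <= 1/7.
  apply: le_trans (_ : \sum_(k < N.+1) u k <= _); first exact: ler_sum_widen.
  rewrite big_ord_recl /u /= add0r.
  have -> : \sum_(i < N) (if bump 0 i == 0%N then 0 else r ^+ bump 0 i) =
            r * \sum_(i < N) r ^+ i.
    by rewrite mulr_sumr; apply: eq_bigr => i _; rewrite exprS.
  have : r * \sum_(i < N) r ^+ i <= 1/8 * (8/7).
    by apply: ler_pM => //; [apply: sumr_ge0 => i _; exact: exprn_ge0 | exact: geometric_sum_le].
  lra.
have h4 : c * \sum_(n < N) r ^+ n <= c * (8/7).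
  by apply: ler_wpM2l => //; exact: geometric_sum_le.
have h5 : (\sum_(k < N) u k) * S <= 1/7 * S by apply: ler_wpM2r.
lra.
Qed.

(* The first possibly nonzero coefficient dominates the tail of the series for
   small [t]. *)
Lemma pseries_first_coef_le (q : R^nat) (K t : R) k :
  (forall n, (n < k)%N -> q n = 0) -> (forall N, \sum_(n < N) `|q n| <= K) ->
  0 < t <= 1 -> series (fun n => q n * t ^+ n) @ \oo --> 0 ->
  `|q k| <= t * K.
Proof.
move=> qk qK /andP[t0 t1] cq.
have tk : 0 < t ^+ k by exact: exprn_gt0.
have tail N : `|\sum_(k.+1 <= n < N) q n * t ^+ n| <= t ^+ k.+1 * K.
  apply: le_trans (ler_norm_sum _ _ _) _.
  apply: le_trans (_ : \sum_(k.+1 <= n < N) t ^+ k.+1 * `|q n| <= _).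
    apply: ler_sum_nat => n /andP[kn _].
    rewrite normrM (ger0_norm (exprn_ge0 n (ltW t0))) mulrC.
    apply: ler_wpM2r => //.
    rewrite -(subnK kn) exprD; apply: ler_piMl; first by rewrite exprn_ge0 ?ltW.
    by apply: exprn_ile1 => //; exact: ltW.
  rewrite -mulr_sumr; apply: ler_wpM2l; first by rewrite exprn_ge0 // ltW.
  have [kN|Nk] := leqP k.+1 N; last first.
    by rewrite big_geq ?(ltnW Nk) //; have := qK 0%N; rewrite big_ord0.
  apply: le_trans (qK N); rewrite -(big_mkord xpredT (fun n => `|q n|)).
  by rewrite (@big_cat_nat _ _ _ k.+1 0 N) //= lerDr sumr_ge0.
have split_at N : (k < N)%N -> series (fun n => q n * t ^+ n) N =
    q k * t ^+ k + \sum_(k.+1 <= n < N) q n * t ^+ n.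
  move=> kN; rewrite /series /= (@big_cat_nat _ _ _ k.+1) //= big_nat_recr //=.
  by rewrite big_nat_cond big1 ?add0r // => n /andP[/andP[_ /qk ->] _]; rewrite mul0r.
suff : `|q k| * t ^+ k <= t ^+ k.+1 * K.
  by rewrite exprS mulrAC ler_pM2r.
have cg : (fun N => `|series (fun n => q n * t ^+ n) N| + t ^+ k.+1 * K) @ \oo -->
    0 + t ^+ k.+1 * K.
  by apply: cvgD; [rewrite -(@normr0 _ R); apply: cvg_norm | exact: cvg_cst].
rewrite add0r in cg; rewrite -(cvg_lim _ cg) //; apply: limr_ge.
  by apply/cvg_ex; eexists; exact: cg.
near=> N; have kN : (k < N)%N by near: N; exact: nbhs_infty_gt.
rewrite -(ger0_norm (exprn_ge0 k (ltW t0))) -normrM.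
rewrite -(addrK (\sum_(k.+1 <= n < N) q n * t ^+ n) (q k * t ^+ k)) -split_at //.
by apply: le_trans (ler_normB _ _) _; rewrite lerD2l.
Unshelve. all: by end_near.
Qed.

Lemma pseries_eq0 (q : R^nat) (K : R) :
  (forall N, \sum_(n < N) `|q n| <= K) ->
  (forall t, 0 < t <= 1 -> series (fun n => q n * t ^+ n) @ \oo --> 0) ->
  forall n, q n = 0.
Proof.
move=> qK cq; have K0 : 0 <= K by have := qK 0%N; rewrite big_ord0.
elim/ltn_ind => k IH; apply/eqP/negPn/negP => qk0.
have a0 : 0 < `|q k| by rewrite normr_gt0.
pose t := `|q k| / (`|q k| + K + 1).
have s0 : 0 < `|q k| + K + 1 by lra.
have ht : t * (`|q k| + K + 1) = `|q k| by rewrite /t mulfVK // gt_eqF.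
have t0 : 0 < t by rewrite /t divr_gt0.
have t1 : t <= 1 by rewrite /t ler_pdivrMr // mul1r; lra.
have t01 : 0 < t <= 1 by rewrite t0 t1.
have := pseries_first_coef_le IH qK t01 (cq t t01); nra.
Qed.

End OneVariableSeries.

Section SoftmaxCoefficients.
Variables (R : realType) (d : nat) (j : 'I_d) (p : 'I_d -> R).
Local Notation midx := (midx d).

Definition invfact k : R := (k`!%:R)^-1.

Lemma exp_coeff_invfact (x : R) k : exp_coeff x k = invfact k * x ^+ k.
Proof. by rewrite exp_coeffE. Qed.

Definition pexp_coef (mu : midx) : R :=
  if [forall l, (l != j) ==> (mu l == 0%N)] then p j * invfact (mu j) else 0.

(* The coefficients [a] of [A(w) = p_j e^(w_j) / \sum_i p_i e^(w_i)] solve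
   [a = pexp_coef - mconv p invfact a] when [\sum_i p_i = 1]; since [mconv]
   only reads coefficients of smaller degree, [mdeg mu] iterations fix [a mu]. *)
Fixpoint smax_coef_iter (N : nat) (mu : midx) : R :=
  if N is N'.+1 then pexp_coef mu - mconv p invfact (smax_coef_iter N') mu
  else pexp_coef mu.

Definition smax_coef (mu : midx) : R := smax_coef_iter (mdeg mu) mu.

Lemma mconv_ext c e (x y : midx -> R) (mu : midx) :
  (forall i k, (1 <= k <= mu i)%N -> x (midx_sub mu i k) = y (midx_sub mu i k)) ->
  mconv c e x mu = mconv c e y mu.
Proof.
move=> xy; apply: eq_bigr => i _; congr (_ * _).
by apply: eq_big_nat => k /andP[k1 k2]; rewrite xy // k1 -ltnS.
Qed.

Lemma mconv_midx0 c e (x : midx -> R) : mconv c e x (midx0 d) = 0.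
Proof. by rewrite /mconv big1 // => i _; rewrite ffunE big_geq ?mulr0. Qed.

Lemma mdeg_sub_lt (mu : midx) i k (N : nat) : (1 <= k <= mu i)%N ->
  (mdeg mu <= N.+1)%N -> (mdeg (midx_sub mu i k) <= N)%N.
Proof.
move=> /andP[k1 kmu] muN; rewrite mdeg_sub // leq_subLR.
by apply: leq_trans muN _; rewrite -add1n leq_add2r.
Qed.

Lemma smax_coef_iter_succ N (mu : midx) : (mdeg mu <= N)%N ->
  smax_coef_iter N.+1 mu = smax_coef_iter N mu.
Proof.
elim: N mu => [|N IH] mu muN.
  by move: muN; rewrite leqn0 mdeg_eq0 => /eqP ->; rewrite /= mconv_midx0 subr0.
rewrite [LHS]/= [RHS]/=; congr (_ - _); apply: mconv_ext => i k kmu.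
exact/IH/(mdeg_sub_lt kmu).
Qed.

Lemma smax_coef_iterE N (mu : midx) : (mdeg mu <= N)%N ->
  smax_coef_iter N mu = smax_coef mu.
Proof.
elim: N => [|N IH]; first by rewrite leqn0 => /eqP dmu; rewrite /smax_coef dmu.
by rewrite leq_eqVlt => /orP[/eqP <- //|muN]; rewrite smax_coef_iter_succ // IH.
Qed.

Lemma smax_coef_rec (mu : midx) :
  smax_coef mu = pexp_coef mu - mconv p invfact smax_coef mu.
Proof.
rewrite /smax_coef; case dmu: (mdeg mu) => [|m] /=.
  by move/eqP: dmu; rewrite mdeg_eq0 => /eqP ->; rewrite mconv_midx0 subr0.
congr (_ - _); apply: mconv_ext => i k kmu.
by apply/smax_coef_iterE/(mdeg_sub_lt kmu); rewrite dmu.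
Qed.

Lemma hcomp_pexp_coef w n : hcomp pexp_coef w n = p j * invfact n * w j ^+ n.
Proof.
pose m := midx_add (midx0 d) j n.
have dm : mdeg m = n by rewrite mdeg_add mdeg_midx0.
rewrite (@hcomp_single _ _ _ _ n m) //.
  rewrite mpow_add mpow_midx0 mulr1 /pexp_coef ifT; last first.
    by apply/forallP => l; apply/implyP => /negbTE hl; rewrite !ffunE hl.
  by rewrite !ffunE eqxx add0n.
move=> mu dmu; apply: contraNeq; rewrite /pexp_coef; case: ifP; last by rewrite eqxx.
move/forallP => mu_j _; apply/eqP/ffunP => l; rewrite !ffunE.
have mu0 l' : l' != j -> mu l' = 0%N by move=> /(implyP (mu_j l')) /eqP.
case: eqP => [->|/eqP /mu0 //].
by rewrite add0n -dmu /mdeg (bigD1 j) //= big1 ?addn0 // => l' /mu0.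
Qed.

Hypothesis p0 : forall i, 0 <= p i.
Hypothesis p1 : \sum_i p i = 1.

Lemma invfact_ge0 k : 0 <= invfact k.
Proof. by rewrite invr_ge0. Qed.

Lemma invfact_le1 k : invfact k <= 1.
Proof. by rewrite invf_le1 // ?ler1n ?ltr0n ?fact_gt0. Qed.

Lemma hcomp_smax_coef w n : hcomp smax_coef w n = p j * invfact n * w j ^+ n -
  \sum_(i < d) p i * \sum_(1 <= k < n.+1) invfact k * (w i ^+ k * hcomp smax_coef w (n - k)).
Proof.
transitivity (hcomp (fun mu => pexp_coef mu - mconv p invfact smax_coef mu) w n).
  by congr hcomp; apply/funext => mu; exact: smax_coef_rec.
by rewrite hcompB hcomp_pexp_coef hcomp_mconv.
Qed.

Lemma pexp_coef_ge0 mu : 0 <= pexp_coef mu.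
Proof. by rewrite /pexp_coef; case: ifP => _ //; rewrite mulr_ge0 ?invfact_ge0. Qed.

Lemma smax_coef_midx0 : smax_coef (midx0 d) = p j.
Proof.
rewrite smax_coef_rec mconv_midx0 subr0 /pexp_coef ifT ?ffunE /invfact ?invr1 ?mulr1 //.
by apply/forallP => l; rewrite ffunE eqxx implybT.
Qed.

Definition abs_hcomp (w : 'I_d -> R) n :=
  hcomp (fun mu => `|smax_coef mu|) (fun i => `|w i|) n.

Lemma abs_hcomp_ge0 w n : 0 <= abs_hcomp w n.
Proof. exact: hcomp_ge0. Qed.

Lemma abs_hcomp0 w : abs_hcomp w 0 = p j.
Proof. by rewrite /abs_hcomp hcomp0 smax_coef_midx0 ger0_norm. Qed.

Lemma normr_smax_coef_le mu :
  `|smax_coef mu| <= pexp_coef mu + mconv p invfact (fun nu => `|smax_coef nu|) mu.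
Proof.
rewrite smax_coef_rec; apply: le_trans (ler_normB _ _) _.
rewrite (ger0_norm (pexp_coef_ge0 mu)) lerD2l.
apply: le_trans (ler_norm_sum _ _ _) _; apply: ler_sum => i _.
rewrite normrM (ger0_norm (p0 i)); apply: ler_wpM2l => //.
apply: le_trans (ler_norm_sum _ _ _) _; apply: ler_sum => k _.
by rewrite normrM (ger0_norm (invfact_ge0 k)).
Qed.

Lemma abs_hcomp_le w (r : R) n : 0 <= r -> (forall i, `|w i| <= r) ->
  abs_hcomp w n <= p j * r ^+ n + \sum_(1 <= k < n.+1) r ^+ k * abs_hcomp w (n - k).
Proof.
move=> r0 wr.
have powr_le i k : invfact k * `|w i| ^+ k <= r ^+ k.
  by rewrite -[leRHS]mul1r ler_pM ?invfact_ge0 ?invfact_le1 ?exprn_ge0 ?lerXn2r ?nnegrE.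
apply: le_trans (_ : hcomp (fun mu => pexp_coef mu +
    mconv p invfact (fun nu => `|smax_coef nu|) mu) (fun i => `|w i|) n <= _).
  by apply: ler_hcomp => [mu|i]; rewrite normr_ge0 ?normr_smax_coef_le ?lexx.
rewrite hcompD hcomp_pexp_coef hcomp_mconv; apply: lerD.
  by rewrite -mulrA ler_wpM2l.
rewrite -[leRHS]mul1r -p1 mulr_suml; apply: ler_sum => i _; apply: ler_wpM2l => //.
apply: ler_sum_nat => k _; rewrite mulrA ler_wpM2r ?abs_hcomp_ge0 //.
Qed.

Lemma sum_abs_hcomp_le w (r : R) N : 0 <= r <= 1/8 -> (forall i, `|w i| <= r) ->
  \sum_(n < N) abs_hcomp w n <= 4/3 * p j.
Proof.
move=> r01 wr; apply: (renewal_sum_le (@abs_hcomp_ge0 w) (p0 j) r01) => n.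
by apply: abs_hcomp_le; [case/andP: r01 | exact: wr].
Qed.

Lemma cvgn_series_abs_hcomp w : (forall i, `|w i| <= 1/8) ->
  cvgn (series (fun n => `|hcomp smax_coef w n|)).
Proof.
move=> w8; apply: nondecreasing_is_cvgn; first by apply: nondecreasing_series_ge0.
exists (4/3 * p j) => _ [N _ <-].
apply: le_trans (sum_abs_hcomp_le (r := 1/8) N _ w8); last by apply/andP; lra.
by rewrite /series /= big_mkord; apply: ler_sum => n _; exact: ler_norm_hcomp.
Qed.

Lemma sum_cauchy_prod_exp w n :
  \sum_(i < d) p i * cauchy_prod (exp_coeff (w i)) (hcomp smax_coef w) n =
  p j * exp_coeff (w j) n.
Proof.
have split0 (F : nat -> R) : \sum_(k < n.+1) F k = F 0%N + \sum_(1 <= k < n.+1) F k.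
  by rewrite -(big_mkord xpredT) big_ltn.
rewrite /cauchy_prod.
under eq_bigr => i _ do
  rewrite (split0 (fun k => exp_coeff (w i) k * hcomp smax_coef w (n - k))) exp_coeff_invfact /invfact fact0 invr1
  mul1r expr0 mul1r subn0 mulrDr.
rewrite big_split /= -mulr_suml p1 mul1r hcomp_smax_coef exp_coeff_invfact mulrA.
rewrite -[RHS]addr0 -addrA; congr (_ + _); rewrite addrC -sumrB; apply: big1 => i _.
rewrite -mulrBr -sumrB big1 ?mulr0 // => k _.
by rewrite exp_coeff_invfact -mulrA subrr.
Qed.

Lemma cvg_series_smax_coef w : (forall i, `|w i| <= 1/8) ->
  series (hcomp smax_coef w) @ \oo -->
  p j * expR (w j) / \sum_(i < d) p i * expR (w i).
Proof.
move=> w8; set A := hcomp smax_coef w.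
have cA : cvgn (series A) by apply: normed_cvg; exact: cvgn_series_abs_hcomp.
set L := limn (series A).
have cexp (x : R) : series (exp_coeff x) @ \oo --> expR x by exact: is_cvg_series_exp_coeff.
have cprod i : series (cauchy_prod (exp_coeff (w i)) A) @ \oo --> expR (w i) * L.
  apply: cvg_series_cauchy_prod; [exact: cexp | exact: cA | | exact: cvgn_series_abs_hcomp].
  have -> : (fun n => `|exp_coeff (w i) n|) = exp_coeff `|w i|.
    by apply/funext => k; rewrite !exp_coeff_invfact normrM normrX ger0_norm ?invfact_ge0.
  exact: is_cvg_series_exp_coeff.
have csum : series (fun n => p j * exp_coeff (w j) n) @ \oo -->
    \sum_(i < d) p i * (expR (w i) * L).
  have -> : series (fun n => p j * exp_coeff (w j) n) =
      fun N => \sum_(i < d) p i * series (cauchy_prod (exp_coeff (w i)) A) N.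
    apply/funext => N; rewrite /series /=.
    under [RHS]eq_bigr do rewrite mulr_sumr.
    by rewrite exchange_big /=; apply: eq_bigr => n _; rewrite sum_cauchy_prod_exp.
  apply: cvg_big => [|i _]; first exact: add_continuous.
  by apply: cvgMl_tmp; exact: cprod.
have cpj : series (fun n => p j * exp_coeff (w j) n) @ \oo --> p j * expR (w j).
  have -> : series (fun n => p j * exp_coeff (w j) n) =
      fun N => p j * series (exp_coeff (w j)) N.
    by apply/funext => N; rewrite /series /= mulr_sumr.
  by apply: cvgMl_tmp; exact: cexp.
have eqL : \sum_(i < d) p i * (expR (w i) * L) = p j * expR (w j).
  by rewrite -(cvg_lim _ csum) // -(cvg_lim _ cpj).
have S0 : 0 < \sum_(i < d) p i * expR (w i).
  have pe0 i : 0 <= p i * expR (w i) by rewrite mulr_ge0 ?expR_ge0.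
  rewrite lt_neqAle sumr_ge0 ?andbT //; apply: contra_neq (@oner_neq0 R).
  move/esym/eqP; rewrite psumr_eq0 // -p1 => /allP pe_eq0; apply: big1 => i _.
  by have := pe_eq0 i (mem_index_enum _); rewrite mulf_eq0 expR_eq0 orbF => /eqP.
suff -> : p j * expR (w j) / \sum_(i < d) p i * expR (w i) = L by [].
rewrite -eqL; under eq_bigr do rewrite mulrA.
by rewrite -mulr_suml mulrAC mulfV ?mul1r // gt_eqF.
Qed.

End SoftmaxCoefficients.

Lemma base_digits_inj (B D : nat) (f g : nat -> nat) : (0 < B)%N ->
  (forall i, (i < D)%N -> (f i < B)%N) -> (forall i, (i < D)%N -> (g i < B)%N) ->
  (\sum_(i < D) f i * B ^ i = \sum_(i < D) g i * B ^ i)%N ->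
  forall i, (i < D)%N -> f i = g i.
Proof.
elim: D f g => [|D IH] f g B0 fB gB; first by move=> _ i.
rewrite !big_ord_recl /= !expn0 !muln1.
have shift (h : nat -> nat) : (\sum_(i < D) h (bump 0 i) * B ^ bump 0 i =
     B * \sum_(i < D) h i.+1 * B ^ i)%N.
  by rewrite big_distrr /=; apply: eq_bigr => i _; rewrite /bump /= add1n expnS mulnCA.
rewrite !shift => E.
have fg0 : f 0%N = g 0%N.
  have := congr1 (modn^~ B) E.
  by rewrite ![(_ + B * _)%N]addnC ![(B * _)%N]mulnC !modnMDl !modn_small ?fB ?gB.
move: E; rewrite fg0 => /addnI /eqP; rewrite eqn_pmul2l // => /eqP E.
case=> [|i] iD; first exact: fg0.
by apply: (IH (fun i => f i.+1) (fun i => g i.+1)) => // k kD; [apply: fB | apply: gB].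
Qed.

Lemma poly_eq0_on_interval (R : realType) (Q : {poly R}) (m : R) : 0 < m ->
  (forall x, 0 < x < m -> Q.[x] = 0) -> Q = 0.
Proof.
move=> m0 HQ; apply/eqP/negPn/negP => nQ.
pose rs := [seq m / (k.+2)%:R | k <- iota 0 (size Q)].
suff : (size rs < size Q)%N by rewrite size_map size_iota ltnn.
apply: (max_poly_roots nQ).
- apply/allP => _ /mapP [k _ ->]; apply/rootP; apply: HQ.
  have k2 : 0 < (k.+2)%:R :> R by rewrite ltr0n.
  by rewrite divr_gt0 //= ltr_pdivrMr // ltr_pMr // ltr1n.
- rewrite map_inj_uniq ?iota_uniq // => k l /(mulfI (lt0r_neq0 m0)) /invr_inj /eqP.
  by rewrite eqr_nat => /eqP [].
Qed.

Section Uniqueness.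
Variables (R : realType) (d : nat).
Local Notation midx := (midx d).

(* Kronecker substitution [w_i := x ^ (B ^ i)] turns [mpow w mu] into [x ^ kron_index B mu];
   on multi-indices of degree [n] it is injective for [B = n.+1]. *)
Definition kron_index (B : nat) (mu : midx) : nat := (\sum_(i < d) mu i * B ^ i)%N.

Lemma kron_index_inj n (mu nu : midx) : mdeg mu = n -> mdeg nu = n ->
  kron_index n.+1 mu = kron_index n.+1 nu -> mu = nu.
Proof.
move=> dmu dnu E; pose ext (m : midx) k := if insub k is Some i then m i else 0%N.
have extE (m : midx) (i : 'I_d) : ext m i = m i by rewrite /ext valK.
have ext_lt (m : midx) k : mdeg m = n -> (k < d)%N -> (ext m k < n.+1)%N.
  by move=> dm kd; rewrite /ext insubT /= ltnS -dm leq_mdeg.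
apply/ffunP => i; rewrite -!extE; apply: (@base_digits_inj n.+1 d) => //.
- by move=> k; apply: ext_lt.
- by move=> k; apply: ext_lt.
- by rewrite (eq_bigr _ (fun k _ => congr1 (muln^~ _) (extE mu k)))
    (eq_bigr _ (fun k _ => congr1 (muln^~ _) (extE nu k))).
Qed.

Lemma mpow_kron (x : R) B (mu : midx) :
  mpow (fun i => x ^+ (B ^ i)) mu = x ^+ kron_index B mu.
Proof.
rewrite /mpow /kron_index -prodrXr; apply: eq_bigr => i _.
by rewrite -exprM mulnC.
Qed.

Lemma hcomp_eq0_coef (c : midx -> R) n (rho : R) : 0 < rho ->
  (forall v, (forall i, `|v i| < rho) -> hcomp c v n = 0) ->
  forall mu, mdeg mu = n -> c mu = 0.
Proof.
move=> rho0 hc mu dmu.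
pose s := finmap.enum_fset (fset_set (@midx_of_deg d n)).
pose Q : {poly R} := \sum_(nu <- s) c nu *: 'X^(kron_index n.+1 nu).
pose m := Num.min rho 1.
have m0 : 0 < m by rewrite lt_min rho0 ltr01.
have Q0 : Q = 0.
  apply: (poly_eq0_on_interval m0) => x /andP[x0 xm].
  have xrho i : `|x ^+ (n.+1 ^ i)| < rho.
    rewrite normrX ger0_norm ?(ltW x0) //; apply: le_lt_trans (_ : x < rho).
      rewrite -[leRHS]expr1; apply: ler_wiXn2l; rewrite ?expn_gt0 ?ltW //.
      by apply: lt_le_trans xm _; rewrite ge_min lexx orbT.
    by apply: lt_le_trans xm _; rewrite ge_min lexx.
  rewrite -(hc _ xrho) hcomp_finE /Q horner_sum.
  by apply: eq_bigr => nu _; rewrite hornerZ hornerXn mpow_kron.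
suff <- : Q`_(kron_index n.+1 mu) = c mu by rewrite Q0 coef0.
have s_mu : mu \in s by rewrite in_fset_set ?inE //; exact: finite_midx_of_deg.
rewrite /Q coef_sum (bigD1_seq mu) //= ?finmap.fset_uniq //.
rewrite coefZ coefXn eqxx mulr1 big1_seq ?addr0 // => nu /andP[nmu nus].
rewrite coefZ coefXn; case: eqP => [E|]; last by rewrite mulr0.
have /set_mem dnu : nu \in @midx_of_deg d n.
  by move: nus; rewrite in_fset_set //; exact: finite_midx_of_deg.
by have := kron_index_inj dnu dmu (esym E); move/eqP; rewrite (negbTE nmu).
Qed.

End Uniqueness.

Section PowerSeries.
Variables (R : realType) (d : nat).
Local Notation midx := (midx d).

Lemma abs_sum_graded (a : midx -> R) (z0 z : pt R d) :
  abs_sum a z0 z [set: midx] =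
  (\sum_(n <oo) (hcomp (fun mu => `|a mu|) (fun i => `|z i - z0 i|) n)%:E)%E.
Proof.
by rewrite /abs_sum esum_midx_graded // => mu; rewrite mulr_ge0 ?mpow_ge0.
Qed.

Lemma abs_sum_graded_pos (a : midx -> R) (z0 z : pt R d) :
  abs_sum a z0 z [set mu | (0 < mdeg mu)%N] =
  (\sum_(n <oo) (if n == 0%N then 0
     else hcomp (fun mu => `|a mu|) (fun i => `|z i - z0 i|) n)%:E)%E.
Proof.
pose G mu := if (0 < mdeg mu)%N then `|a mu| * amono z0 z mu else 0.
rewrite /abs_sum esum_mkcond (eq_esum (b := fun mu => (G mu)%:E)) => [|mu _].
  rewrite esum_midx_graded => [|mu]; last first.
    by rewrite /G; case: ifP => // _; rewrite mulr_ge0 ?mpow_ge0.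
  apply: eq_eseriesr => n _; congr (_%:E); case: (eqVneq n 0%N) => [->|n0].
    by rewrite fsbig1 // => mu /= dmu; rewrite /G dmu.
  by apply: eq_fsbigr => mu /set_mem /= dmu; rewrite /G ifT // dmu lt0n.
have -> : (mu \in [set mu : midx | (0 < mdeg mu)%N]) = (0 < mdeg mu)%N.
  by apply/idP/idP => [/set_mem //|/mem_set].
by rewrite /G; case: ifP.
Qed.

Lemma nneseries_le_bound (x : nat -> R) (c : R) : (forall n, 0 <= x n) ->
  (forall N, \sum_(n < N) x n <= c) -> (\sum_(n <oo) (x n)%:E <= c%:E)%E.
Proof.
move=> x0 xc; apply: lime_le; first by apply: is_cvg_nneseries => n _ _; rewrite lee_fin.
by apply: nearW => N; rewrite sumEFin lee_fin big_mkord.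
Qed.

Lemma sum_hcomp_le_abs_sum (a : midx -> R) (z0 z : pt R d) N :
  ((\sum_(n < N) hcomp (fun mu => `|a mu|) (fun i => `|z i - z0 i|) n)%:E <=
   abs_sum a z0 z [set: midx])%E.
Proof.
rewrite abs_sum_graded -sumEFin.
have := @nneseries_lim_ge R
  (fun n => (hcomp (fun mu => `|a mu|) (fun i => `|z i - z0 i|) n)%:E) xpredT 0 N.
by rewrite big_mkord; apply => n _ _; rewrite lee_fin hcomp_ge0.
Qed.

Section Ray.
Variables (U : set (pt R d)) (f : pt R d -> R) (z0 : pt R d) (a : midx -> R) (r : R).
Hypothesis ha : forall z, (forall i, `|z i - z0 i| < r) ->
  U z /\ abs_conv a z0 z /\
  (fun N : nat => \sum_(n < N) hom_part a z0 z n) @ \oo --> f z.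
Variable v : 'I_d -> R.
Hypothesis vr : forall i, `|v i| < r.

Let zt (t : R) : pt R d := fun i => z0 i + t * v i.

Let ztE t i : zt t i - z0 i = t * v i.
Proof. by rewrite /zt addrAC subrr add0r. Qed.

Let zt_near t : 0 <= t <= 1 -> forall i, `|zt t i - z0 i| < r.
Proof.
move=> /andP[t0 t1] i; rewrite ztE.
rewrite normrM ger0_norm //; apply: le_lt_trans (vr i).
by rewrite -[leRHS]mul1r ler_wpM2r.
Qed.

Lemma power_series_ray_bounded :
  exists K, forall N, \sum_(n < N) `|hcomp a v n| <= K.
Proof.
have z1 : forall i, `|zt 1 i - z0 i| < r by apply: zt_near; rewrite ler01 lexx.
have [_ [ac _]] := ha z1.
have fin : abs_sum a z0 (zt 1) [set: midx] \is a fin_num.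
  by rewrite ge0_fin_numE ?esum_ge0 // => mu _; rewrite lee_fin mulr_ge0 ?mpow_ge0.
exists (fine (abs_sum a z0 (zt 1) [set: midx])) => N; rewrite -lee_fin fineK //.
apply: le_trans (sum_hcomp_le_abs_sum _ _ _ N); rewrite lee_fin.
apply: ler_sum => n _; apply: le_trans (ler_norm_hcomp _ _ _) _.
by apply: ler_hcomp => [mu|i]; rewrite ?ztE ?mul1r normr_ge0 lexx.
Qed.

Lemma cvg_power_series_ray t : 0 <= t <= 1 ->
  series (fun n => hcomp a v n * t ^+ n) @ \oo --> f (fun i => z0 i + t * v i).
Proof.
move=> t01; have [_ [_ cf]] := ha (zt_near t01).
suff -> : series (fun n => hcomp a v n * t ^+ n) =
    (fun N => \sum_(n < N) hom_part a z0 (zt t) n) by [].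
apply/funext => N; rewrite /series /= big_mkord; apply: eq_bigr => n _.
rewrite hom_partE (_ : (fun i => zt t i - z0 i) = (fun i => t * v i)).
  by rewrite hcompZw mulrC.
by apply/funext => i; exact: ztE.
Qed.

End Ray.

Lemma is_power_series_at_unique (U : set (pt R d)) (f : pt R d -> R) z0 (a b : midx -> R) :
  is_power_series_at U f z0 a -> is_power_series_at U f z0 b -> a = b.
Proof.
move=> [ra ra0 ha] [rb rb0 hb]; pose rho := Num.min ra rb.
have rho0 : 0 < rho by rewrite lt_min ra0 rb0.
have rhoa : rho <= ra by rewrite ge_min lexx.
have rhob : rho <= rb by rewrite ge_min lexx orbT.
apply/funext => mu; apply/eqP; rewrite -subr_eq0; apply/eqP.
apply: (@hcomp_eq0_coef _ _ (fun mu => a mu - b mu) (mdeg mu) rho) => // v vrho.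
have va i : `|v i| < ra by exact: lt_le_trans (vrho i) rhoa.
have vb i : `|v i| < rb by exact: lt_le_trans (vrho i) rhob.
have [Ka hKa] := power_series_ray_bounded ha va.
have [Kb hKb] := power_series_ray_bounded hb vb.
pose q n := hcomp a v n - hcomp b v n.
rewrite hcompB -/(q _); apply: (@pseries_eq0 _ q (Ka + Kb)) => [N|t /andP[t0 t1]].
  apply: le_trans (lerD (hKa N) (hKb N)); rewrite -big_split /=.
  by apply: ler_sum => n _; exact: ler_normB.
have t01 : 0 <= t <= 1 by rewrite ltW.
rewrite -(subrr (f (fun i => z0 i + t * v i))).
have -> : series (fun n => q n * t ^+ n) = fun N =>
    series (fun n => hcomp a v n * t ^+ n) N - series (fun n => hcomp b v n * t ^+ n) N.
  by apply/funext => N; rewrite /series /= -sumrB; apply: eq_bigr => n _; rewrite mulrBl.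
by apply: cvgB; [move: (cvg_power_series_ray ha va t01) | move: (cvg_power_series_ray hb vb t01)].
Qed.

End PowerSeries.

Section Softmax.
Variables (R : realType) (d : nat) (j : 'I_d).

Lemma sum_expR_gt0 (z : pt R d) : 0 < \sum_(l < d) expR (z l).
Proof.
apply: lt_le_trans (expR_gt0 (z j)) _; rewrite (bigD1 j) //= lerDl.
by apply: sumr_ge0 => *; exact: expR_ge0.
Qed.

Lemma smax_ge0 (z : pt R d) i : 0 <= smax i z.
Proof. by rewrite divr_ge0 ?expR_ge0 // ltW // sum_expR_gt0. Qed.

Lemma sum_smax (z : pt R d) : \sum_i smax i z = 1.
Proof. by rewrite -mulr_suml mulfV // gt_eqF // sum_expR_gt0. Qed.

Lemma smax_le1 (z : pt R d) : smax j z <= 1.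
Proof.
by rewrite -(sum_smax z) (bigD1 j) //= lerDl sumr_ge0 // => i _; exact: smax_ge0.
Qed.

Lemma smax_recenter (z0 z : pt R d) : smax j z =
  smax j z0 * expR (z j - z0 j) / \sum_(i < d) smax i z0 * expR (z i - z0 i).
Proof.
have S0 := sum_expR_gt0 z0; have S := sum_expR_gt0 z.
have e i : smax i z0 * expR (z i - z0 i) = expR (z i) / \sum_(l < d) expR (z0 l).
  by rewrite /smax expRB; field; rewrite expR_eq0 gt_eqF.
under eq_bigr do rewrite e.
by rewrite e -mulr_suml /smax; field; rewrite !gt_eqF.
Qed.

Definition smax_series (z0 : pt R d) := smax_coef j (fun i => smax i z0).

Lemma smax_series_bound (z0 z : pt R d) N : (forall i, `|z i - z0 i| <= 1/8) ->
  \sum_(n < N) hcomp (fun mu => `|smax_series z0 mu|) (fun i => `|z i - z0 i|) n <=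
  4/3 * smax j z0.
Proof.
move=> z8; apply: (@sum_abs_hcomp_le _ _ _ _ (@smax_ge0 z0) (sum_smax z0) _ (1/8)).
  by apply/andP; lra.
exact: z8.
Qed.

Lemma abs_conv_smax_series (z0 z : pt R d) : (forall i, `|z i - z0 i| <= 1/8) ->
  abs_conv (smax_series z0) z0 z.
Proof.
move=> z8; rewrite /abs_conv abs_sum_graded; apply: le_lt_trans (ltry (4/3 * smax j z0)).
by apply: nneseries_le_bound => [n|N]; [exact: hcomp_ge0 | exact: smax_series_bound].
Qed.

(* The constant term is [smax j z0], so the higher-order terms add up to at most
   [smax j z0 / 3]. *)
Lemma abs_sum_pos_smax_series (z0 z : pt R d) : (forall i, `|z i - z0 i| <= 1/8) ->
  (abs_sum (smax_series z0) z0 z [set mu | (0 < mdeg mu)%N] <= 1%:E)%E.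
Proof.
move=> z8; rewrite abs_sum_graded_pos.
apply: nneseries_le_bound => [n|[|N]]; first by case: eqP => // _; exact: hcomp_ge0.
  by rewrite big_ord0 ler01.
have := smax_series_bound N.+1 z8; rewrite !big_ord_recl eqxx add0r.
have := @abs_hcomp0 R d j _ (@smax_ge0 z0) (fun i => z i - z0 i); rewrite /abs_hcomp => ->.
by have := smax_le1 z0; lra.
Qed.

Lemma is_power_series_smax (z0 : pt R d) :
  is_power_series_at [set: pt R d] (smax j) z0 (smax_series z0).
Proof.
exists (1/8) => [|z z8]; first by rewrite divr_gt0.
have z8' i : `|z i - z0 i| <= 1/8 by exact: ltW.
split=> //; split; first exact: abs_conv_smax_series.
have -> : (fun N => \sum_(n < N) hom_part (smax_series z0) z0 z n) =
    series (hcomp (smax_series z0) (fun i => z i - z0 i)).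
  by apply/funext => N; rewrite /series /= big_mkord; apply: eq_bigr => n _; exact: hom_partE.
rewrite (smax_recenter z0); apply: cvg_series_smax_coef => //; first exact: smax_ge0.
exact: sum_smax.
Qed.

End Softmax.

Lemma inv_2expR2_le (R : realType) : 1 / (2 * expR 2) <= 1/8 :> R.
Proof.
have e1 : 2 <= expR 1 :> R by have := expR_ge1Dx (1 : R); lra.
have e2 : 4 <= expR 2 :> R.
  rewrite (_ : 2 = 1 + 1) // expRD; have : 2 * 2 <= expR 1 * expR 1 :> R by rewrite ler_pM.
  lra.
by rewrite ler_pdivrMr ?mulr_gt0 ?expR_gt0 //; nra.
Qed.

Theorem mainTheorem10 (R : realType) (d : nat) (hd : (1 <= d)%N) (j : 'I_d) :
  analytic_type [set: 'I_d -> R]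
    (fun _ => 1 / (2 * expR 2)) (fun _ => 1) (smax j).
Proof.
split=> [z0 _|z0 _ b hb z hz]; first by exists (smax_series j z0); exact: is_power_series_smax.
rewrite -(is_power_series_at_unique (is_power_series_smax j z0) hb).
have z8 i : `|z i - z0 i| <= 1/8 by apply: le_trans (hz i) (inv_2expR2_le R).
by split; [exact: abs_conv_smax_series | exact: abs_sum_pos_smax_series].
Qed.
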